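(* Let $\tau$ be an untwisted skew product with base shift a transitive subshift of finite type and group factor $\mathbb Z^d$. (b) If $0\in\mathrm{rot}(\tau)$, then $\mathrm{rot}(\tau)$ is $d$-dimensional if and only if $\langle D(\tau)\rangle$ is a rank-$d$ subgroup of $\mathbb Z^d$. (c) If $\tau$ has the ftp and $0\in\mathrm{rot}(\tau)$, then $\mathrm{rot}(\tau)$ is $d$-dimensional.
   Context: Subshift of finite type $(\Sigma,\sigma)$: finite state set $S$, $\{0,1\}$-matrix $C$, $\Sigma=\{s\in S^{\mathbb Z}:C_{s_is_{i+1}}=1\ \forall i\}$, $\sigma$ the left shift; transitive means for any states $a,b$ there is an allowed finite word from $a$ to $b$. Untwisted skew product: $\tau(s,n)=(\sigma s,n+h(s))$ on $\Sigma\times\mathbb Z^d$, $h$ depending only on $(s_0,s_1)$. $h(s,n)=\sum_{i=0}^{n-1}h(\sigma^is)$; $\mathrm{rot}(s)=\lim h(s,n)/n$ when it exists; $\mathrm{rot}(\tau)\subset\mathbb R^d$ the set of all rotation vectors (it is a convex polytope, the convex hull of rotation vectors of finitely many periodic points). Dimension means dimension of the convex set. $D(\tau)=\{h(p,n):n>0,\sigma^np=p\}$; $\langle X\rangle$ the generated subgroup. ftp: $\tau_\Gamma$ (induced map on $\Sigma\times\mathbb Z^d/\Gamma$) is transitive for every finite-index subgroup $\Gamma$. *)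

From Stdlib Require Import Reals ZArith.
From mathcomp Require Import all_boot.

Set Implicit Arguments.
Unset Strict Implicit.
Unset Printing Implicit Defensive.

Definition zvec (d : nat) := 'I_d -> Z.
Definition rvec (d : nat) := 'I_d -> R.

Definition zadd d (u v : zvec d) : zvec d := fun j => (u j + v j)%Z.
Definition zsub d (u v : zvec d) : zvec d := fun j => (u j - v j)%Z.
Definition zzero d : zvec d := fun _ => 0%Z.

Definition seqZ (S : Type) := Z -> S.

Definition in_Sigma (S : finType) (C : S -> S -> bool) (s : seqZ S) : Prop :=
  forall i : Z, C (s i) (s (i + 1)%Z) = true.

Definition shift (S : Type) (s : seqZ S) : seqZ S := fun i => s (i + 1)%Z.
Definition shiftn (S : Type) (n : nat) (s : seqZ S) : seqZ S :=
  fun i => s (i + Z.of_nat n)%Z.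

Fixpoint allowed_path (S : finType) (C : S -> S -> bool) (a : S) (w : seq S) : bool :=
  match w with
  | [::] => true
  | x :: w' => C a x && allowed_path C x w'
  end.

Definition sft_transitive (S : finType) (C : S -> S -> bool) : Prop :=
  forall a b : S, exists w : seq S,
    w <> [::] /\ allowed_path C a w = true /\ last a w = b.

(* h : S -> S -> Z^d, the cocycle h(s) = h(s_0, s_1);
   Birkhoff sum h(s,n) = sum_{k<n} h(sigma^k s) *)
Definition hsum (S : Type) (d : nat) (h : S -> S -> zvec d) (s : seqZ S) (n : nat)
  : zvec d :=
  fun j => \big[Z.add/0%Z]_(k < n) h (s (Z.of_nat k)) (s (Z.of_nat k + 1)%Z) j.

Definition rot_of (S : Type) (d : nat) (h : S -> S -> zvec d) (s : seqZ S)
  (v : rvec d) : Prop :=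
  forall j : 'I_d, Un_cv (fun n => Rdiv (IZR (hsum h s n j)) (INR n)) (v j).

Definition rot_set (S : finType) (C : S -> S -> bool) (d : nat)
  (h : S -> S -> zvec d) (v : rvec d) : Prop :=
  exists s, in_Sigma C s /\ rot_of h s v.

Definition Dset (S : finType) (C : S -> S -> bool) (d : nat)
  (h : S -> S -> zvec d) (v : zvec d) : Prop :=
  exists (p : seqZ S) (n : nat), (0 < n)%N /\ in_Sigma C p /\
    (forall i, shiftn n p i = p i) /\ v = hsum h p n.

Inductive gen_subgroup (d : nat) (X : zvec d -> Prop) : zvec d -> Prop :=
  | gen_zero : gen_subgroup X (@zzero d)
  | gen_in : forall v, X v -> gen_subgroup X v
  | gen_sub : forall u v, gen_subgroup X u -> gen_subgroup X v ->
      gen_subgroup X (zsub u v).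

Definition Z_lin_indep (d : nat) (w : 'I_d -> zvec d) : Prop :=
  forall c : 'I_d -> Z,
    (forall j : 'I_d, \big[Z.add/0%Z]_(i < d) (c i * w i j)%Z = 0%Z) ->
    forall i, c i = 0%Z.

(* a subgroup G of Z^d has rank d: it contains d Z-linearly independent
   elements (rank = maximal number of independent elements, always <= d) *)
Definition rank_full (d : nat) (G : zvec d -> Prop) : Prop :=
  exists w : 'I_d -> zvec d, (forall i, G (w i)) /\ Z_lin_indep w.

Definition R_lin_indep (d : nat) (w : 'I_d -> rvec d) : Prop :=
  forall c : 'I_d -> R,
    (forall j : 'I_d, \big[Rplus/R0]_(i in 'I_d) Rmult (c i) (w i j) = R0) ->
    forall i, c i = R0.

(* a set K of R^d is d-dimensional: its affine hull is R^d, i.e. it contains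
   d+1 affinely independent points p_0, ..., p_d *)
Definition full_dim (d : nat) (K : rvec d -> Prop) : Prop :=
  exists p : 'I_d.+1 -> rvec d, (forall k, K (p k)) /\
    R_lin_indep (fun i : 'I_d => fun j => Rminus (p (lift ord0 i) j) (p ord0 j)).

Definition is_subgroup (d : nat) (G : zvec d -> Prop) : Prop :=
  G (@zzero d) /\ (forall u v, G u -> G v -> G (zsub u v)).

Definition finite_index (d : nat) (G : zvec d -> Prop) : Prop :=
  exists reps : seq (zvec d), forall v, exists r, List.In r reps /\ G (zsub v r).

(* A subset of Sigma x Z^d/G is represented by its G-saturated preimage
   U in Sigma x Z^d.  It is open (product topology, Z^d/G discrete) iff for each
   (s,v) in U there is N such that every t in Sigma agreeing with s on [-N,N]
   gives (t,v) in U. *)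
Definition sat_open (S : finType) (C : S -> S -> bool) (d : nat)
  (G : zvec d -> Prop) (U : seqZ S -> zvec d -> Prop) : Prop :=
  (forall s v g, G g -> U s v -> U s (zadd v g)) /\
  (forall s v, in_Sigma C s -> U s v ->
     exists N : nat, forall t, in_Sigma C t ->
       (forall i : Z, (Z.abs i <= Z.of_nat N)%Z -> t i = s i) -> U t v).

(* tau^n (s, v) = (sigma^n s, v + h(s,n)); tau_G transitive: for all nonempty
   open U, V of Sigma x Z^d/G there is n > 0 with tau_G^n(U) meeting V *)
Definition tau_quot_transitive (S : finType) (C : S -> S -> bool) (d : nat)
  (h : S -> S -> zvec d) (G : zvec d -> Prop) : Prop :=
  forall U V : seqZ S -> zvec d -> Prop,
    sat_open C G U -> sat_open C G V ->
    (exists s v, in_Sigma C s /\ U s v) ->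
    (exists s v, in_Sigma C s /\ V s v) ->
    exists s v (n : nat), (0 < n)%N /\ in_Sigma C s /\ U s v /\
      V (shiftn n s) (zadd v (hsum h s n)).

Definition ftp (S : finType) (C : S -> S -> bool) (d : nat)
  (h : S -> S -> zvec d) : Prop :=
  forall G : zvec d -> Prop, is_subgroup G -> finite_index G ->
    tau_quot_transitive C h G.

(* Write D for D(tau), the set of displacements h(p, n) of periodic points.  The
   proof turns on a dichotomy obtained by linear algebra over Q
   (integer_dichotomy): either a nonzero integer functional c vanishes on D, or D
   contains d vectors forming a nonsingular integer matrix.
   - In the second case the rotation vectors h(p_i, n_i) / n_i of the periodic
     points realising these vectors, together with 0 in rot(tau), are affinely
     independent, so rot(tau) is d-dimensional (full_dim_of_not_annihilated).
   - In the first case Livsic's theorem (livsic) writes c.h as a coboundary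
     g(s_1) - g(s_0); the Birkhoff sums of c.h are then bounded and c annihilates
     every rotation vector (rot_orthogonal), so rot(tau) lies in a hyperplane.
     Moreover <D> lies in ker c and has rank < d (rank_full_not_annihilated), and
     under the ftp the first case cannot occur (ftp_not_annihilated): the level
     sets of c.v - g(s_0) modulo M > |c_j| are disjoint tau-invariant open sets
     of Sigma x Z^d / {v | M divides c.v}. *)

From Stdlib Require Import Reals ZArith Lra Lia ClassicalEpsilon.
From mathcomp Require Import all_boot all_algebra.
From mathcomp Require Import ssrZ zify Rstruct.

Set Implicit Arguments.
Unset Strict Implicit.
Unset Printing Implicit Defensive.

Import GRing.Theory Num.Theory.
Local Open Scope ring_scope.

(* Integer vectors are read in MathComp's int through the ring isomorphism
   int_of_Z : Z -> int; integer functionals on Z^d are then ordinary sums. *)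

Lemma IZR_intr (z : Z) : IZR z = (int_of_Z z)%:~R.
Proof.
rewrite -{1}[z]int_of_ZK; case: (int_of_Z z) => n /=.
  by rewrite -INR_IZR_INZ INRE.
by rewrite opp_IZR -INR_IZR_INZ INRE NegzE mulrNz addn1.
Qed.

Lemma int_of_ZD (x y : Z) : int_of_Z (Z.add x y) = int_of_Z x + int_of_Z y.
Proof. exact: rmorphD. Qed.

Lemma int_of_ZM (x y : Z) : int_of_Z (Z.mul x y) = int_of_Z x * int_of_Z y.
Proof. exact: rmorphM. Qed.

Lemma int_of_Z_nat (n : nat) : int_of_Z (Z.of_nat n) = n%:Z.
Proof. by rewrite -[RHS]Z_of_intK. Qed.

Lemma int_of_Z_sum (I : Type) (r : seq I) (P : pred I) (F : I -> Z) :
  int_of_Z (\big[Z.add/Z0]_(i <- r | P i) F i) = \sum_(i <- r | P i) int_of_Z (F i).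
Proof. by apply: big_morph; [exact: rmorphD | exact: rmorph0]. Qed.

Definition zdot d (c : 'I_d -> int) (x : zvec d) : int :=
  \sum_j c j * int_of_Z (x j).

Lemma zdotD d (c : 'I_d -> int) u v : zdot c (zadd u v) = zdot c u + zdot c v.
Proof. by rewrite /zdot -big_split; apply: eq_bigr => j _; rewrite /zadd int_of_ZD mulrDr. Qed.

Lemma zdotB d (c : 'I_d -> int) u v : zdot c (zsub u v) = zdot c u - zdot c v.
Proof. by rewrite /zdot -sumrB; apply: eq_bigr => j _; rewrite /zsub rmorphB mulrBr. Qed.

Lemma zdot0 d (c : 'I_d -> int) : zdot c (@zzero d) = 0.
Proof. by rewrite /zdot big1 // => j _; rewrite /zzero rmorph0 mulr0. Qed.

Section RowDichotomy.
Variables (F : fieldType) (d : nat) (X : 'rV[F]_d -> Prop).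

Definition annihilator (c : 'cV[F]_d) : Prop :=
  c != 0 /\ forall x, X x -> x *m c = 0.

(* Greedy extraction: if no hyperplane contains X, every r <= d independent rows
   of X extend by one more row of X lying outside their span. *)
Lemma independent_rows_in : ~ (exists c, annihilator c) ->
  forall r, (r <= d)%N -> exists A : 'M[F]_(r, d), (forall i, X (row i A)) /\ \rank A = r.
Proof.
move=> no_annihilator; elim=> [|r IH] le_r_d.
  by exists 0; split; [case | rewrite mxrank0].
have [A [XA rkA]] := IH (ltnW le_r_d).
have [v kerv v0] : exists2 v : 'rV_d, (v <= kermx A^T)%MS & v != 0.
  by apply/rowV0Pn; rewrite -mxrank_eq0 mxrank_ker mxrank_tr rkA subn_eq0 -ltnNge.
have Av : A *m v^T = 0 by rewrite -[A]trmxK -trmx_mul (sub_kermxP kerv) trmx0.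
have [x [Xx xv]] : exists x, X x /\ x *m v^T != 0.
  apply: NNPP => none; apply: no_annihilator; exists v^T; split; first by rewrite trmx_eq0.
  by move=> x Xx; apply: NNPP => xv; apply: none; exists x; split => //; apply/eqP.
have xA : ~~ (x <= A)%MS.
  by apply/negP => /submxP [D xDA]; move: xv; rewrite xDA -mulmxA Av mulmx0 eqxx.
exists (col_mx x A); split.
  move=> i; case: (@split_ordP 1 r i) => k ->.
    by have -> : row (lshift r k) (col_mx x A) = x by rewrite rowKu row_id.
  by have -> : row (rshift 1 k) (col_mx x A) = row k A by rewrite rowKd.
have grows : (A < x + A)%MS.
  by rewrite ltmxE addsmxSr /=; apply: contra xA => /(submx_trans (addsmxSl x A)).
apply/eqP; rewrite eqn_leq rank_leq_row /= -(addsmxE x A).1.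
by have := rank_ltmx grows; rewrite rkA.
Qed.

Lemma row_dichotomy : (exists c, annihilator c) \/
  exists W : 'M[F]_d, (forall i, X (row i W)) /\ W \in unitmx.
Proof.
case: (classic (exists c, annihilator c)) => [|no_annihilator]; first by left.
right; have [W [XW rkW]] := independent_rows_in no_annihilator (leqnn d).
by exists W; split; last by rewrite -row_free_unit /row_free rkW.
Qed.
End RowDichotomy.

Definition annihilated d (X : zvec d -> Prop) : Prop :=
  exists c : 'I_d -> int, (exists j, c j != 0) /\ forall x, X x -> zdot c x = 0.

Definition zmat d (W : 'I_d -> zvec d) : 'M[int]_d := \matrix_(i, j) int_of_Z (W i j).

Definition qvec d (x : zvec d) : 'rV[rat]_d := \row_j (int_of_Z (x j))%:~R.

Lemma common_denominator d (c : 'I_d -> rat) :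
  exists2 N : int, N != 0 & exists ci : 'I_d -> int, forall j, (ci j)%:~R = c j * N%:~R.
Proof.
exists (\prod_j denq (c j)); first by apply/prodf_neq0 => j _; exact: denq_neq0.
exists (fun j => numq (c j) * \prod_(k | k != j) denq (c k)) => j.
by rewrite /= [in RHS](bigD1 j) //= !intrM numqE mulrA.
Qed.

Lemma integer_dichotomy d (X : zvec d -> Prop) :
  annihilated X \/ exists W : 'I_d -> zvec d, (forall i, X (W i)) /\ \det (zmat W) != 0.
Proof.
case: (row_dichotomy (fun v : 'rV[rat]_d => exists x, X x /\ v = qvec x)).
  move=> [c [/matrix0Pn [j [k cjk]] Xc]]; left.
  have [N N0 [ci Eci]] := common_denominator (fun j => c j 0).
  exists ci; split.
    by exists j; rewrite -(intr_eq0 rat) Eci mulf_neq0 ?intr_eq0 // -(ord1 k).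
  move=> x Xx; apply: (@intr_inj rat); rewrite rmorph_sum rmorph0 /=.
  move/matrixP: (Xc _ (ex_intro _ x (conj Xx erefl))) => /(_ 0 0); rewrite !mxE => qxc.
  rewrite (eq_bigr (fun j => N%:~R * (qvec x 0 j * c j 0))) -?mulr_sumr ?qxc ?mulr0 //.
  by move=> i _; rewrite intrM Eci mxE mulrAC [RHS]mulrC [c i 0 * _]mulrC.
move=> [W [XW unitW]]; right.
have [x Hx] := choice (fun i y => X y /\ row i W = qvec y) XW.
exists x; split=> [i|]; first by case: (Hx i).
have W_int : W = map_mx intr (zmat x).
  by apply/row_matrixP => i; case: (Hx i) => _ ->; apply/rowP => j; rewrite !mxE.
by move: unitW; rewrite W_int unitmxE det_map_mx unitfE intr_eq0.
Qed.

Lemma Z_lin_indepE d (W : 'I_d -> zvec d) : Z_lin_indep W <-> \det (zmat W) != 0.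
Proof.
have relE c j : int_of_Z (\big[Z.add/Z0]_(i < d) Z.mul (c i) (W i j)) =
    (\row_i int_of_Z (c i) *m zmat W) 0 j.
  by rewrite int_of_Z_sum !mxE; apply: eq_bigr => i _; rewrite rmorphM !mxE.
split=> [indep | detW c rel i].
  apply/negP => /det0P [v /eqP v0 vW]; apply: v0; apply/rowP => i.
  have vE : \row_i int_of_Z (Z_of_int (v 0 i)) = v.
    by apply/rowP => j; rewrite !mxE Z_of_intK.
  rewrite mxE -[v 0 i]Z_of_intK (indep (fun i => Z_of_int (v 0 i))) // => j.
  by apply: (can_inj int_of_ZK); rewrite relE vE vW mxE.
have /eqP v0 : \row_i int_of_Z (c i) == 0.
  apply: contraR detW => v0; apply/det0P; exists (\row_i int_of_Z (c i)) => //.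
  by apply/rowP => j; rewrite -relE rel mxE.
by move/rowP: v0 => /(_ i); rewrite !mxE => /(congr1 Z_of_int); rewrite int_of_ZK.
Qed.

Lemma zdot_gen_subgroup d (X : zvec d -> Prop) (c : 'I_d -> int) :
  (forall x, X x -> zdot c x = 0) -> forall v, gen_subgroup X v -> zdot c v = 0.
Proof.
move=> cX v; elim=> [|x /cX //|u w _ cu _ cw]; first exact: zdot0.
by rewrite zdotB cu cw subr0.
Qed.

Lemma rank_full_not_annihilated d (X : zvec d -> Prop) :
  rank_full (gen_subgroup X) -> ~ annihilated X.
Proof.
move=> [w [Gw /Z_lin_indepE detw]] [c [[j cj] cX]].
have wc : zmat w *m \col_j c j = 0.
  apply/colP => i; rewrite !mxE; transitivity (zdot c (w i)).
    by apply: eq_bigr => k _; rewrite !mxE mulrC.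
  exact: zdot_gen_subgroup cX _ (Gw i).
move/negP: detw; apply; rewrite -det_tr; apply/det0P; exists (\col_j c j)^T.
  by rewrite trmx_eq0; apply/matrix0Pn; exists j, 0; rewrite mxE.
by rewrite -trmx_mul wc trmx0.
Qed.

Lemma R_lin_indep_of_det d (W : 'I_d -> zvec d) (n : 'I_d -> nat) :
  \det (zmat W) != 0 -> (forall i, (0 < n i)%N) ->
  R_lin_indep (fun i j => Rdiv (IZR (W i j)) (INR (n i))).
Proof.
move=> detW n_gt0 c rel i.
pose MW : 'M[R]_d := map_mx intr (zmat W).
have unitMW : MW \in unitmx by rewrite unitmxE det_map_mx unitfE intr_eq0.
have vMW : \row_i (c i / (n i)%:R) *m MW = 0.
  apply/rowP => j; rewrite !mxE; transitivity (\sum_i c i * (IZR (W i j) / INR (n i))).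
    by apply: eq_bigr => k _; rewrite !mxE IZR_intr INRE mulrAC mulrA.
  exact: rel j.
have /rowP/(_ i) := congr1 (mulmx^~ (invmx MW)) vMW.
rewrite mulmxK // mul0mx !mxE => /eqP.
by rewrite mulf_eq0 invr_eq0 pnatr_eq0 eqn0Ngt n_gt0 orbF => /eqP.
Qed.

Lemma full_dim_hyperplane d (K : rvec d -> Prop) (a : 'I_d -> R) :
  full_dim K -> (forall v, K v -> \sum_j a j * v j = 0) -> forall j, a j = 0.
Proof.
move=> [p [Kp indep]] aK.
pose U : 'M[R]_d := \matrix_(i, j) (p (lift ord0 i) j - p ord0 j).
have unitU : U \in unitmx.
  rewrite unitmxE unitfE; apply/negP => /det0P [v /eqP v0 vU]; apply: v0.
  apply/rowP => i; rewrite mxE; apply: (indep (fun i => v 0 i)) => j.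
  transitivity ((v *m U) 0 j); last by rewrite vU mxE.
  by rewrite mxE; apply: eq_big => // k _; rewrite mxE.
have Ua : U *m \col_j a j = 0.
  apply/colP => i; rewrite !mxE.
  transitivity (\sum_j a j * p (lift ord0 i) j - \sum_j a j * p ord0 j).
    by rewrite -sumrB; apply: eq_bigr => j _; rewrite !mxE -mulrBr mulrC.
  by rewrite !aK ?subr0.
move=> j; have /colP/(_ j) := congr1 (mulmx (invmx U)) Ua.
by rewrite mulKmx // mulmx0 !mxE.
Qed.

Section RealSequences.
Local Open Scope R_scope.

Lemma cv_bounded_error (a : nat -> R) (L K : R) :
  (forall m, Rabs (a m - INR m * L) <= K) -> Un_cv (fun m => a m / INR m) L.
Proof.
move=> bound eps eps_gt0.
have K_ge0 : 0 <= K := Rle_trans _ _ _ (Rabs_pos _) (bound 0%N).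
pose e := eps / (K + 1).
have e_gt0 : 0 < e by apply: Rdiv_lt_0_compat; lra.
have eps_e : eps = e * (K + 1) by rewrite /e; field; lra.
have [N [invN_lt N_gt0]] := archimed_cor1 e e_gt0.
exists N => m le_Nm; rewrite /R_dist.
have N_pos : 0 < INR N by apply: lt_0_INR.
have m_pos : 0 < INR m by apply: lt_0_INR; lia.
have invm_le : / INR m <= / INR N by apply: Rinv_le_contravar => //; apply: le_INR.
have invm_pos : 0 < / INR m by apply: Rinv_0_lt_compat.
have -> : a m / INR m - L = (a m - INR m * L) * / INR m by field; lra.
rewrite Rabs_mult (Rabs_pos_eq (/ INR m)); last lra.
have := bound m; have := Rabs_pos (a m - INR m * L); nra.
Qed.

Lemma finite_bound (T : finType) (f : T -> R) : exists B, forall t, Rabs (f t) <= B.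
Proof.
exists (\sum_t `|f t|) => t; apply/RleP.
by rewrite RabsE (bigD1 t) //= lerDl sumr_ge0.
Qed.

Lemma cv_const (x : R) : Un_cv (fun _ => x) x.
Proof. by move=> eps eps_gt0; exists 0%N => m _; rewrite /R_dist Rminus_diag Rabs_R0. Qed.

Lemma cv_sum (I : Type) (r : seq I) (u : I -> nat -> R) (l : I -> R) :
  (forall i, Un_cv (u i) (l i)) -> Un_cv (fun m => \sum_(i <- r) u i m) (\sum_(i <- r) l i).
Proof.
move=> cvu; elim: r => [|i r IH].
  by rewrite big_nil; apply: (Un_cv_ext (fun _ => R0)) => [m|]; [rewrite big_nil | exact: cv_const].
apply: (Un_cv_ext (fun m => u i m + \sum_(j <- r) u j m)) => [m|]; first by rewrite big_cons.
by rewrite big_cons; apply: CV_plus.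
Qed.

End RealSequences.

Section AllowedWords.
Variables (S : finType) (C : S -> S -> bool).
Local Open Scope Z_scope.

Lemma in_Sigma_nat s : in_Sigma C s -> forall k : nat, C (s (Z.of_nat k)) (s (Z.of_nat k.+1)).
Proof. by move=> Hs k; rewrite Nat2Z.inj_succ; exact: Hs. Qed.

Lemma allowed_cat a w1 w2 :
  allowed_path C a (w1 ++ w2) = allowed_path C a w1 && allowed_path C (last a w1) w2.
Proof. by elim: w1 a => [|x w IH] a //=; rewrite IH andbA. Qed.

Lemma allowed_nth a0 a w : allowed_path C a w ->
  forall k, (k < size w)%N -> C (nth a0 (a :: w) k) (nth a0 (a :: w) k.+1).
Proof. by elim: w a => [|x w IH] a //= /andP [Cax Hw] [|k] //= /IH; apply. Qed.

Lemma periodic_point_of_loop a w : w != [::] -> allowed_path C a w -> last a w = a ->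
  exists p : seqZ S, [/\ in_Sigma C p, forall i, shiftn (size w) p i = p i &
    forall k, (k <= size w)%N -> p (Z.of_nat k) = nth a (a :: w) k].
Proof.
move=> w_nil allowed closed.
have n_pos : 0 < Z.of_nat (size w) by case: w w_nil {allowed closed} => //= x w _; lia.
set n := size w in n_pos *.
pose p (i : Z) := nth a (a :: w) (Z.to_nat (Z.modulo i (Z.of_nat n))).
have p_nat k : (k <= n)%N -> p (Z.of_nat k) = nth a (a :: w) k.
  rewrite leq_eqVlt => /orP [/eqP -> | lt_kn].
    by rewrite /p Z_mod_same_full /= -[X in nth _ _ X]/(size w) -last_nth closed.
  by rewrite /p Z.mod_small ?Nat2Z.id //; move/ssrnat.ltP: lt_kn; lia.
exists p; split=> // [i|i].
  have [r_ge0 r_lt] := Z.mod_pos_bound i (Z.of_nat n) n_pos.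
  set k := Z.to_nat (Z.modulo i (Z.of_nat n)).
  have lt_kn : (k < n)%N by apply/ssrnat.ltP; lia.
  have -> : p (i + 1) = p (Z.of_nat k.+1).
    by rewrite /p /k Nat2Z.inj_succ Z2Nat.id // Z.add_mod_idemp_l //; lia.
  by rewrite p_nat //; apply: allowed_nth.
rewrite /shiftn /p -[X in Z.add i X]Z.mul_1_l Z_mod_plus_full //.
Qed.
End AllowedWords.

Section Livsic.
Variables (S : finType) (C : S -> S -> bool) (V : zmodType) (psi : S -> S -> V).

Fixpoint word_sum (a : S) (w : seq S) : V :=
  if w is x :: w' then psi a x + word_sum x w' else 0.

Definition bsum (s : seqZ S) (m : nat) : V :=
  \sum_(k < m) psi (s (Z.of_nat k)) (s (Z.of_nat k.+1)).

Lemma word_sum_cat a w1 w2 : word_sum a (w1 ++ w2) = word_sum a w1 + word_sum (last a w1) w2.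
Proof. by elim: w1 a => [|x w IH] a /=; rewrite ?add0r // IH addrA. Qed.

Lemma word_sum_nth a0 a w :
  word_sum a w = \sum_(k < size w) psi (nth a0 (a :: w) k) (nth a0 (a :: w) k.+1).
Proof. by elim: w a => [|x w IH] a /=; rewrite ?big_ord0 // big_ord_recl IH. Qed.

Hypothesis periodic_sums_vanish : forall p n, (0 < n)%N -> in_Sigma C p ->
  (forall i, shiftn n p i = p i) -> bsum p n = 0.

(* The sum along a closed allowed word is a periodic Birkhoff sum, hence 0. *)
Lemma closed_word_sum a w : w != [::] -> allowed_path C a w -> last a w = a ->
  word_sum a w = 0.
Proof.
move=> w_nil allowed closed.
have [p [Sp p_per p_nth]] := periodic_point_of_loop w_nil allowed closed.
rewrite -(periodic_sums_vanish _ Sp p_per); last by case: w w_nil {allowed closed p_per p_nth}.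
rewrite (word_sum_nth a); apply: eq_bigr => k _.
by rewrite !p_nth // ltnW.
Qed.

Lemma livsic : sft_transitive C -> forall a0 : S,
  exists g : S -> V, forall a b, C a b -> psi a b = g b - g a.
Proof.
move=> transitive a0.
have [back back_spec] := choice _ (fun b => transitive b a0).
have [forth forth_spec] := choice _ (fun a => transitive a0 a).
exists (fun b => - word_sum b (back b)) => a b Cab.
have [_ [allowed_a last_a]] := back_spec a.
have [_ [allowed_b last_b]] := back_spec b.
have [forth_nil [allowed_fa last_fa]] := forth_spec a.
have via_a : word_sum a0 (forth a ++ back a) = 0.
  apply: closed_word_sum; last by rewrite last_cat last_fa.
    by case: (forth a) forth_nil.
  by rewrite allowed_cat allowed_fa last_fa.
have via_b : word_sum a0 (forth a ++ b :: back b) = 0.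
  apply: closed_word_sum; last by rewrite last_cat last_fa.
    by case: (forth a).
  by rewrite allowed_cat allowed_fa last_fa /= Cab.
rewrite !word_sum_cat last_fa /= in via_a via_b.
have : word_sum a (back a) = psi a b + word_sum b (back b).
  by apply: (addrI (word_sum a0 (forth a))); rewrite via_a via_b.
by move=> ->; rewrite opprK addrCA addNr addr0.
Qed.

Lemma bsum_coboundary (g : S -> V) : (forall a b, C a b -> psi a b = g b - g a) ->
  forall s, in_Sigma C s -> forall m, bsum s m = g (s (Z.of_nat m)) - g (s Z0).
Proof.
move=> cob s Ss; elim=> [|m IH]; first by rewrite /bsum big_ord0 subrr.
by rewrite /bsum big_ord_recr /= -/(bsum s m) IH cob ?in_Sigma_nat // addrC addrA subrK.
Qed.
End Livsic.

Section BirkhoffSums.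
Variables (S : finType) (d : nat) (h : S -> S -> zvec d).

Lemma hsum_ext s t : (forall i, s i = t i) -> forall m j, hsum h s m j = hsum h t m j.
Proof. by move=> st m j; apply: eq_bigr => k _; rewrite !st. Qed.

Lemma int_of_hsum s m j : int_of_Z (hsum h s m j) =
  \sum_(k < m) int_of_Z (h (s (Z.of_nat k)) (s (Z.of_nat k.+1)) j).
Proof. by rewrite int_of_Z_sum; apply: eq_bigr => k _; rewrite Nat2Z.inj_succ. Qed.

Lemma hsum_add s a b j :
  hsum h s (a + b) j = Z.add (hsum h s a j) (hsum h (shiftn a s) b j).
Proof.
apply: (can_inj int_of_ZK); rewrite int_of_ZD !int_of_hsum big_split_ord /=.
congr (_ + _); apply: eq_bigr => k _; rewrite /shiftn.
by congr (int_of_Z (h (s _) (s _) j)); lia.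
Qed.

Lemma hsum_periodic p n : (forall i, shiftn n p i = p i) -> forall q r j,
  hsum h p (q * n + r) j = Z.add (Z.mul (Z.of_nat q) (hsum h p n j)) (hsum h p r j).
Proof.
move=> p_per q r j; elim: q => [|q IH]; first by rewrite mul0n.
by rewrite mulSn -addnA hsum_add (hsum_ext p_per) IH; lia.
Qed.

Lemma zdot_hsum (c : 'I_d -> int) s m :
  zdot c (hsum h s m) = bsum (fun a b => zdot c (h a b)) s m.
Proof.
rewrite /zdot /bsum exchange_big; apply: eq_bigr => j _.
by rewrite int_of_hsum mulr_sumr.
Qed.

Section Rotation.
Local Open Scope R_scope.

Lemma rot_of_periodic p n : (0 < n)%N -> (forall i, shiftn n p i = p i) ->
  rot_of h p (fun j => IZR (hsum h p n j) / INR n).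
Proof.
move=> n_gt0 p_per j; set X := IZR (hsum h p n j).
have [B boundB] := finite_bound (fun r : 'I_n => IZR (hsum h p r j)).
apply: (@cv_bounded_error _ _ (B + Rabs X)) => m.
have r_lt : (m %% n < n)%N by rewrite ltn_mod.
have := boundB (Ordinal r_lt); rewrite /=.
set A := IZR (hsum h p (m %% n) j) => A_le.
have n_pos : 0 < INR n by apply: lt_0_INR; apply/ssrnat.ltP.
have r_le : 0 <= INR (m %% n) <= INR n.
  by split; [exact: pos_INR | apply: le_INR; apply/ssrnat.leP; exact: ltnW].
have t_le : 0 <= INR (m %% n) / INR n <= 1.
  have t_n : INR (m %% n) / INR n * INR n = INR (m %% n) by field; lra.
  by split; nra.
rewrite {1 2}(divn_eq m n) hsum_periodic // plus_IZR mult_IZR -INR_IZR_INZ plus_INR mult_INR -/A -/X.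
have -> : INR (m %/ n) * X + A - (INR (m %/ n) * INR n + INR (m %% n)) * (X / INR n) =
          A + - (INR (m %% n) / INR n * X) by field; lra.
apply: Rle_trans (Rabs_triang _ _) _.
rewrite Rabs_Ropp Rabs_mult (Rabs_pos_eq (INR _ / INR n)); last lra.
by have := Rabs_pos X; nra.
Qed.

(* If c.h is a coboundary, the averaged Birkhoff sums of c.h tend to 0, so c
   annihilates every rotation vector. *)
Lemma rot_orthogonal (C : S -> S -> bool) (c : 'I_d -> int) (g : S -> int) :
  (forall a b, C a b -> zdot c (h a b) = g b - g a)%R ->
  forall s v, in_Sigma C s -> rot_of h s v -> (\sum_j (c j)%:~R * v j = 0)%R.
Proof.
move=> cob s v Ss rot_v.
pose u m := (\sum_j (c j)%:~R * (IZR (hsum h s m j) / INR m))%R.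
have u_v : Un_cv u (\sum_j (c j)%:~R * v j)%R.
  by apply: cv_sum => j; apply: CV_mult; [exact: cv_const | exact: rot_v].
have u_0 : Un_cv u 0.
  have [B boundB] := finite_bound (fun a => (g a)%:~R : R).
  apply: (Un_cv_ext (fun m => ((g (s (Z.of_nat m)) - g (s Z0))%R%:~R / INR m))) => [m|].
    rewrite /u -(bsum_coboundary cob Ss) -zdot_hsum rmorph_sum RdivE mulr_suml.
    by apply: eq_bigr => j _; rewrite rmorphM IZR_intr mulrA.
  apply: (@cv_bounded_error _ _ (B + B)) => m.
  rewrite Rmult_0_r Rminus_0_r intrB.
  by apply: Rle_trans (Rabs_triang _ _) _; rewrite Rabs_Ropp; apply: Rplus_le_compat.
exact: UL_sequence u_v u_0.
Qed.
End Rotation.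
End BirkhoffSums.

Lemma coboundary_of_annihilator (S : finType) (C : S -> S -> bool) d
    (h : S -> S -> zvec d) (c : 'I_d -> int) :
  sft_transitive C -> (forall x, Dset C h x -> zdot c x = 0) -> forall a0 : S,
  exists g : S -> int, forall a b, C a b -> zdot c (h a b) = g b - g a.
Proof.
move=> transitive cD; apply: livsic transitive => p n n_gt0 Sp p_per.
by rewrite -zdot_hsum; apply: cD; exists p, n.
Qed.

Lemma full_dim_of_not_annihilated (S : finType) (C : S -> S -> bool) d
    (h : S -> S -> zvec d) :
  rot_set C h (fun _ => R0) -> ~ annihilated (Dset C h) -> full_dim (rot_set C h).
Proof.
move=> rot0 not_annihilated.
have [//|[W [DW detW]]] := integer_dichotomy (Dset C h).
have [p Hp] := choice _ DW; have [n Hn] := choice _ Hp.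
pose P (k : 'I_d.+1) : rvec d :=
  if unlift ord0 k is Some i then fun j => Rdiv (IZR (W i j)) (INR (n i)) else fun _ => R0.
exists P; split=> [k|c rel].
  rewrite /P; case: (unlift ord0 k) => [i|] //.
  have [n_gt0 [Sp [p_per ->]]] := Hn i.
  by exists (p i); split => //; apply: rot_of_periodic.
apply: (R_lin_indep_of_det (n := n) detW) => [i|j]; first by case: (Hn i).
rewrite -[in RHS](rel j); apply: eq_bigr => i _.
by rewrite /P liftK unlift_none Rminus_0_r.
Qed.

Lemma in_In (T : eqType) (x : T) (s : seq T) : x \in s -> List.In x s.
Proof. by elim: s => [|y s IH] //; rewrite in_cons => /orP [/eqP -> | /IH]; [left | right]. Qed.

Lemma finite_index_of_residues d (G : zvec d -> Prop) (M : nat) : (0 < M)%N ->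
  (forall u v, (forall j, exists k, u j = Z.add (v j) (Z.mul k (Z.of_nat M))) -> G (zsub u v)) ->
  finite_index G.
Proof.
move=> M_gt0 G_congr.
have M_pos : Z.lt Z0 (Z.of_nat M) by move/ssrnat.ltP: M_gt0; lia.
exists (List.map (fun f : {ffun 'I_d -> 'I_M} => fun j => Z.of_nat (f j)) (enum {ffun 'I_d -> 'I_M})).
move=> v; have res_lt j : (Z.to_nat (Z.modulo (v j) (Z.of_nat M)) < M)%N.
  by apply/ssrnat.ltP; have := Z.mod_pos_bound (v j) (Z.of_nat M) M_pos; lia.
exists (fun j => Z.of_nat ([ffun j => Ordinal (res_lt j)] j)); split.
  by apply: List.in_map; apply: in_In; rewrite mem_enum.
apply: G_congr => j; exists (Z.div (v j) (Z.of_nat M)); rewrite ffunE /=.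
have := Z.mod_pos_bound (v j) (Z.of_nat M) M_pos; have := Z.div_mod (v j) (Z.of_nat M).
lia.
Qed.

Section DivisibilitySubgroup.
Variables (d : nat) (c : 'I_d -> int).

Definition dvd_subgroup (M : int) (v : zvec d) : Prop := (M %| zdot c v)%Z.

Lemma dvd_subgroup_subgroup M : is_subgroup (dvd_subgroup M).
Proof. by split=> [|u v Gu Gv]; rewrite /dvd_subgroup ?zdot0 ?zdotB ?dvdz0 ?rpredB. Qed.

(* It contains M Z^d, hence has finite index. *)
Lemma dvd_subgroup_finite_index (M : nat) : (0 < M)%N -> finite_index (dvd_subgroup M%:Z).
Proof.
move=> M_gt0; apply: finite_index_of_residues M_gt0 _ => u v congr_uv.
rewrite /dvd_subgroup zdotB -sumrB; apply: rpred_sum => j _; rewrite -mulrBr.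
have [k ->] := congr_uv j; rewrite int_of_ZD int_of_ZM int_of_Z_nat addrC addKr.
by rewrite mulrA dvdz_mull ?dvdzz.
Qed.

Definition zunit (j0 : 'I_d) : zvec d := fun j => if j == j0 then Z.of_nat 1 else Z0.

Lemma zdot_zunit j0 : zdot c (zunit j0) = c j0.
Proof.
rewrite /zdot (bigD1 j0) //= big1 => [|j /negPf]; rewrite /zunit; last by move=> ->; rewrite mulr0.
by rewrite eqxx int_of_Z_nat mulr1 addr0.
Qed.
End DivisibilitySubgroup.

Section LevelSets.
(* Given a coboundary c.h = g(s_1) - g(s_0), the class of c.v - g(s_0) modulo M
   is a locally constant, tau-invariant function on Sigma x Z^d / G, where
   G = dvd_subgroup c M; its fibres are the levels below. *)
Variables (S : finType) (C : S -> S -> bool) (d : nat) (h : S -> S -> zvec d).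
Variables (c : 'I_d -> int) (g : S -> int) (M : int).
Hypothesis cob : forall a b, C a b -> zdot c (h a b) = g b - g a.

Definition level (t : int) (s : seqZ S) (v : zvec d) : Prop :=
  (M %| zdot c v - g (s Z0) - t)%Z.

Lemma level_open t : sat_open C (dvd_subgroup c M) (level t).
Proof.
split=> [s v w Gw Lv|s v _ Lv].
  rewrite /level zdotD (_ : _ + _ - _ - _ = zdot c v - g (s Z0) - t + zdot c w); last lia.
  exact: rpredD.
by exists 0%N => s' _ agree; rewrite /level (agree Z0).
Qed.

(* tau^n preserves every level, since c.h(s, n) = g(s_n) - g(s_0). *)
Lemma level_invariant t s v n : in_Sigma C s -> level t s v ->
  level t (shiftn n s) (zadd v (hsum h s n)).
Proof.
move=> Ss; rewrite /level zdotD zdot_hsum (bsum_coboundary cob Ss) /shiftn /=.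
by congr (M %| _)%Z; lia.
Qed.
End LevelSets.

(* The ftp prevents D(tau) from lying in a rational hyperplane: otherwise the
   levels of c.v - g(s_0) modulo M > |c_j| would be disjoint invariant open
   sets of a transitive quotient. *)
Lemma ftp_not_annihilated (S : finType) (C : S -> S -> bool) d (h : S -> S -> zvec d) :
  sft_transitive C -> (exists s0, in_Sigma C s0) -> ftp C h -> ~ annihilated (Dset C h).
Proof.
move=> transitive [s0 Ss0] ftp_h [c [[j0 cj0] cD]].
have [g cob] := coboundary_of_annihilator transitive cD (s0 Z0).
pose M := `|c j0|.+1; pose t0 := - g (s0 Z0).
have L0 : level c g M t0 s0 (@zzero d).
  by rewrite /level zdot0 /t0 (_ : _ - _ - _ = 0) ?dvdz0 //; lia.
have L1 : level c g M (t0 + c j0) s0 (zunit j0).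
  by rewrite /level zdot_zunit /t0 (_ : _ - _ - _ = 0) ?dvdz0 //; lia.
have [s [v [n [_ [Ss [Ls Ls']]]]]] := ftp_h _ (dvd_subgroup_subgroup c M)
  (dvd_subgroup_finite_index c (ltn0Sn _)) _ _
  (level_open C c g M t0) (level_open C c g M (t0 + c j0))
  (ex_intro _ s0 (ex_intro _ _ (conj Ss0 L0))) (ex_intro _ s0 (ex_intro _ _ (conj Ss0 L1))).
(* tau^n sends a point of level t0 into both levels t0 and t0 + c_j0, so M
   would divide c_j0, although 0 < |c_j0| < M. *)
have := level_invariant cob n Ss Ls; move: Ls'; rewrite /level.
set x := _ - g _; move=> Mx' Mx.
have : (M%:Z %| c j0)%Z.
  rewrite (_ : c j0 = x - t0 - (x - (t0 + c j0))); first exact: rpredB.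
  by clearbody x t0; lia.
rewrite dvdzE /= => /dvdn_leq; rewrite absz_gt0 cj0 => /(_ isT).
by rewrite /M ltnn.
Qed.

Theorem mainTheorem7 (d : nat) (S : finType) (C : S -> S -> bool)
  (h : S -> S -> zvec d) :
  sft_transitive C ->
  (rot_set C h (fun _ => R0) ->
     (full_dim (rot_set C h) <-> rank_full (gen_subgroup (Dset C h)))) /\
  (ftp C h -> rot_set C h (fun _ => R0) -> full_dim (rot_set C h)).
Proof.
move=> transitive; split=> [rot0 | ftp_h rot0]; last first.
  apply: full_dim_of_not_annihilated => //; apply: ftp_not_annihilated => //.
  by case: rot0 => s [Ss _]; exists s.
split=> [full | /rank_full_not_annihilated]; last exact: full_dim_of_not_annihilated.
case: (integer_dichotomy (Dset C h)) => [[c [[j cj] cD]] | [W [DW detW]]].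
  (* c would annihilate every rotation vector, flattening rot(tau) *)
  have [s0 [Ss0 _]] := rot0.
  have [g cob] := coboundary_of_annihilator transitive cD (s0 Z0).
  have flat v : rot_set C h v -> \sum_j (c j)%:~R * v j = 0.
    by move=> [s [Ss rot_v]]; apply: (rot_orthogonal cob Ss rot_v).
  by have /eqP := full_dim_hyperplane full flat j; rewrite intr_eq0 (negPf cj).
by exists W; split=> [i|]; [apply: gen_in | apply/Z_lin_indepE].
Qed.
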